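(* Let $X=\{x_j:j\in J\}\subset\mathbb{R}^2$ be finite with quadratic min-power centre $s^*$, centroid $M$ and $1$-centre $C$. Let $J^*\subseteq J$ be the support of a KKT multiplier vector for $s^*$ with the minimum possible number of nonzero entries, chosen so that $\{x_j:j\in J^*\}$ is the vertex set of a face of a farthest point Delaunay triangulation of $X$, and let $\mathcal{M}^*=\{M_j:j\in J^*\}$. If $M\in\mathrm{conv}(\mathcal{M}^* )$ then $s^*=C$.
   Context: $n=|J|$; $P(s)=\sum_{i\in J}\|s-x_i\|^2+\max_{i\in J}\|s-x_i\|^2$ and $s^*$ is its unique minimiser; $M=\frac1n\sum_i x_i$; $M_j=\frac{1}{n+1}\big(x_j+\sum_{i\in J}x_i\big)$; $C$ is the centre of the minimum enclosing circle of $X$. A KKT multiplier vector for $s^*$ is $(\lambda_j)_{j\in J}$ with $\lambda_j\geq0$, $\sum_j\lambda_j=1$, $s^*=\sum_j\lambda_jM_j$, and $\lambda_j\big(\|s^*-x_j\|-\max_{i}\|s^*-x_i\|\big)=0$ for all $j$. A farthest point Delaunay triangulation of $X$ is a triangulation of the extreme points of $X$ in which the circumcircle of every triangle encloses all of $X$; its faces are its vertices, edges and triangles. *)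

From HB Require Import structures.
From mathcomp Require Import all_boot all_order all_algebra.
From mathcomp Require Import reals.
Set Implicit Arguments. Unset Strict Implicit. Unset Printing Implicit Defensive.
Import Order.TTheory GRing.Theory Num.Theory.
Local Open Scope ring_scope.

Section Defs.
Variables (R : realType) (J : finType).
Notation pt := 'rV[R]_2.

Definition sqdist (a b : pt) : R := \sum_(k < 2) (a 0 k - b 0 k) ^+ 2.
Definition dist (a b : pt) : R := Num.sqrt (sqdist a b).

(* max_{i in J} ||s - x_i||  (distances are >= 0, so 0 is a neutral start) *)
Definition maxdist (x : J -> pt) (s : pt) : R := \big[Num.max/0]_(i : J) dist s (x i).

Definition Ppow (x : J -> pt) (s : pt) : R :=
  \sum_(i : J) dist s (x i) ^+ 2 + maxdist x s ^+ 2.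

Definition min_power_centre (x : J -> pt) (s : pt) : Prop :=
  forall t : pt, Ppow x s <= Ppow x t.

Definition mec_centre (x : J -> pt) (c : pt) : Prop :=
  forall t : pt, maxdist x c <= maxdist x t.

Definition centroid (x : J -> pt) : pt := (#|J|%:R)^-1 *: \sum_(i : J) x i.

Definition Mj (x : J -> pt) (j : J) : pt := ((#|J|.+1)%:R)^-1 *: (x j + \sum_(i : J) x i).

Definition KKT (x : J -> pt) (s : pt) (lam : J -> R) : Prop :=
  [/\ forall j, 0 <= lam j,
      \sum_(j : J) lam j = 1,
      s = \sum_(j : J) lam j *: Mj x j
    & forall j, lam j * (dist s (x j) - maxdist x s) = 0].

Definition supp (lam : J -> R) : {set J} := [set j | lam j != 0].

Definition in_hull (f : J -> pt) (A : {set J}) (p : pt) : Prop :=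
  exists w : J -> R,
    [/\ forall j, 0 <= w j,
        forall j, j \notin A -> w j = 0,
        \sum_(j : J) w j = 1
      & p = \sum_(j : J) w j *: f j].

Definition extreme (x : J -> pt) (j : J) : Prop := ~ in_hull x (setT :\ j) (x j).

Definition aff_indep (x : J -> pt) (A : {set J}) : Prop :=
  forall w : J -> R,
    (forall j, j \notin A -> w j = 0) ->
    \sum_(j : J) w j = 0 -> \sum_(j : J) w j *: x j = 0 ->
    forall j, w j = 0.

(* a geometric simplicial complex in R^2 with vertices among the x_j;
   a simplex is given by its (nonempty) vertex set *)
Definition simplicial_complex (x : J -> pt) (K : {set {set J}}) : Prop :=
  [/\ forall A : {set J}, A \in K -> [/\ A != set0, (#|A| <= 3)%N & aff_indep x A],
      forall A B : {set J}, A \in K -> B \subset A -> B != set0 -> B \in K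
    & forall (A B : {set J}) (p : pt), A \in K -> B \in K ->
        in_hull x A p -> in_hull x B p -> in_hull x (A :&: B) p].

Definition triangulation_extreme (x : J -> pt) (K : {set {set J}}) : Prop :=
  [/\ simplicial_complex x K,
      forall (A : {set J}) (j : J), A \in K -> j \in A -> extreme x j,
      forall j, extreme x j -> [set j] \in K
    & forall p, (forall E : {set J}, (forall j, j \in E <-> extreme x j) -> in_hull x E p) ->
        exists2 A, A \in K & in_hull x A p].

(* farthest point Delaunay triangulation of X: the circumcircle of every
   triangle encloses all of X.  Its faces are the elements of K. *)
Definition FPDT (x : J -> pt) (K : {set {set J}}) : Prop :=
  triangulation_extreme x K /\
  forall A : {set J}, A \in K -> #|A| = 3%N ->
    exists (c : pt) (r : R),
      (forall j, j \in A -> dist c (x j) = r) /\ (forall i, dist c (x i) <= r).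

End Defs.

From HB Require Import structures.
From mathcomp Require Import all_boot all_order all_algebra.
From mathcomp Require Import reals.
From mathcomp Require Import ring.

Set Implicit Arguments.
Unset Strict Implicit.
Unset Printing Implicit Defensive.
Import Order.TTheory GRing.Theory Num.Theory.
Local Open Scope ring_scope.

(* Idea: the centroid M is both (1/n) sum x_i and, being a convex combination
   of the M_j with weights w, also sum_j w_j x_j.  The KKT equation
   s = sum_j lam_j M_j then writes s as a convex combination, with weights
   (lam + n w)/(n + 1) supported on J*, of points x_j lying at maximal
   distance from s.  A point that is a barycentre of its farthest points is
   the unique minimiser of the maximal distance, since for any t the
   weighted mean of |t - x_j|^2 equals |t - s|^2 + max_j |s - x_j|^2. *)

Section Distances.
Variable R : realType.
Implicit Types a b t : 'rV[R]_2.

Lemma sqdist_ge0 a b : 0 <= sqdist a b.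
Proof. by apply: sumr_ge0 => k _; rewrite sqr_ge0. Qed.

Lemma dist_ge0 a b : 0 <= dist a b.
Proof. exact: sqrtr_ge0. Qed.

Lemma sqr_dist a b : dist a b ^+ 2 = sqdist a b.
Proof. by rewrite /dist sqr_sqrtr // sqdist_ge0. Qed.

Lemma sqdist_eq0 a b : sqdist a b <= 0 -> a = b.
Proof.
move=> le0; apply/rowP => k; apply/eqP; rewrite -subr_eq0 -sqrf_eq0.
rewrite eq_le sqr_ge0 andbT; apply: le_trans le0.
by rewrite /sqdist (bigD1 k) //= lerDl; apply: sumr_ge0 => i _; rewrite sqr_ge0.
Qed.

Variables (J : finType) (x : J -> 'rV[R]_2).

Lemma dist_le_maxdist t i : dist t (x i) <= maxdist x t.
Proof. exact: (le_bigmax 0 (fun i => dist t (x i)) i). Qed.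

Lemma maxdist_ge0 t : 0 <= maxdist x t.
Proof.
apply: (big_ind (fun v => 0 <= v)) => // [a b a0 b0|i _]; last exact: dist_ge0.
by rewrite le_max a0.
Qed.

End Distances.

Section Barycentre.
Variables (R : realType) (J : finType) (mu : J -> R).
Hypothesis sum_mu : \sum_j mu j = 1.

Lemma sum_sqr_barycentre (a : J -> R) (t : R) :
  \sum_j mu j * (t - a j) ^+ 2 =
  (t - \sum_j mu j * a j) ^+ 2 + \sum_j mu j * (\sum_i mu i * a i - a j) ^+ 2.
Proof.
set b := \sum_j mu j * a j.
have centred : \sum_j mu j * (b - a j) = 0.
  by rewrite (eq_bigr (fun j => b * mu j - mu j * a j)) => [|j _];
    [rewrite sumrB -mulr_sumr sum_mu mulr1 subrr | rewrite mulrBr mulrC].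
rewrite (eq_bigr (fun j => (t - b) ^+ 2 * mu j +
    2 * (t - b) * (mu j * (b - a j)) + mu j * (b - a j) ^+ 2)) => [|j _];
  last by ring.
by rewrite !big_split /= -!mulr_sumr sum_mu centred mulr0 addr0 mulr1.
Qed.

Variable x : J -> 'rV[R]_2.

Lemma sum_sqdist_barycentre (t : 'rV[R]_2) :
  \sum_j mu j * sqdist t (x j) =
  sqdist t (\sum_j mu j *: x j) + \sum_j mu j * sqdist (\sum_i mu i *: x i) (x j).
Proof.
have coord (k : 'I_2) : (\sum_j mu j *: x j) 0 k = \sum_j mu j * x j 0 k.
  by rewrite summxE; apply: eq_bigr => j _; rewrite mxE.
rewrite /sqdist; under eq_bigr do rewrite mulr_sumr.
under [X in _ = _ + X]eq_bigr do rewrite mulr_sumr.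
rewrite exchange_big /= [X in _ = _ + X]exchange_big -big_split /=.
by apply: eq_bigr => k _; rewrite sum_sqr_barycentre coord.
Qed.

Lemma farthest_barycentre_maxdist_le (t : 'rV[R]_2) :
  (forall j, 0 <= mu j) ->
  (forall j, mu j != 0 -> dist (\sum_i mu i *: x i) (x j) =
                          maxdist x (\sum_i mu i *: x i)) ->
  maxdist x t <= maxdist x (\sum_i mu i *: x i) -> t = \sum_i mu i *: x i.
Proof.
set s := \sum_i mu i *: x i; set r := maxdist x s => mu_ge0 farthest le_tr.
have mean_s : \sum_j mu j * sqdist s (x j) = r ^+ 2.
  rewrite -[r ^+ 2]mul1r -sum_mu mulr_suml; apply: eq_bigr => j _.
  by have [->|/farthest <-] := eqVneq (mu j) 0; rewrite ?mul0r ?sqr_dist.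
have mean_t : \sum_j mu j * sqdist t (x j) <= r ^+ 2.
  rewrite -[r ^+ 2]mul1r -sum_mu mulr_suml; apply: ler_sum => j _.
  rewrite ler_wpM2l // -sqr_dist lerXn2r ?nnegrE ?dist_ge0 ?maxdist_ge0 //.
  exact: le_trans (dist_le_maxdist x t j) le_tr.
by apply: sqdist_eq0; move: mean_t; rewrite sum_sqdist_barycentre mean_s gerDr.
Qed.

End Barycentre.

Section MinPowerCentre.
Variables (R : realType) (J : finType) (x : J -> 'rV[R]_2).
Let n : R := #|J|%:R.

Lemma sum_centroid : (0 < #|J|)%N -> \sum_i x i = n *: centroid x.
Proof. by move=> J_gt0; rewrite scalerA divff ?scale1r // pnatr_eq0 -lt0n. Qed.

Lemma sum_scale_Mj (v : J -> R) : \sum_j v j = 1 ->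
  \sum_j v j *: Mj x j = (n + 1)^-1 *: (\sum_j v j *: x j + \sum_i x i).
Proof.
move=> sum_v; rewrite /Mj -natr1 -/n.
under eq_bigr do rewrite scalerA mulrC -scalerA scalerDr.
by rewrite -scaler_sumr big_split /= -scaler_suml sum_v scale1r.
Qed.

Lemma centroid_barycentre_Mj (w : J -> R) : (0 < #|J|)%N -> \sum_j w j = 1 ->
  centroid x = \sum_j w j *: Mj x j -> centroid x = \sum_j w j *: x j.
Proof.
move=> J_gt0 sum_w; rewrite sum_scale_Mj // => M_eq.
have n1_neq0 : n + 1 != 0 by rewrite natr1 pnatr_eq0.
have : (n + 1) *: centroid x = \sum_j w j *: x j + n *: centroid x.
  by rewrite {1}M_eq scalerA divff // scale1r sum_centroid.
by rewrite scalerDl scale1r addrC => /addIr.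
Qed.

Lemma Mj_comb_barycentre (v w : J -> R) : (0 < #|J|)%N ->
  \sum_j v j = 1 -> \sum_j w j = 1 -> centroid x = \sum_j w j *: Mj x j ->
  \sum_j v j *: Mj x j = \sum_j ((n + 1)^-1 * (v j + n * w j)) *: x j.
Proof.
move=> J_gt0 sum_v sum_w M_eq.
rewrite sum_scale_Mj // sum_centroid // (centroid_barycentre_Mj J_gt0 sum_w M_eq).
rewrite scaler_sumr -big_split scaler_sumr; apply: eq_bigr => j _.
by rewrite /= [n *: _]scalerA -scalerDl scalerA.
Qed.

End MinPowerCentre.

Theorem proposition2 (R : realType) (J : finType) (x : J -> 'rV[R]_2)
    (s C : 'rV[R]_2) (Jstar : {set J}) :
  injective x ->
  min_power_centre x s ->
  mec_centre x C ->
  (exists lam : J -> R, KKT x s lam /\ supp lam = Jstar) ->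
  (forall lam : J -> R, KKT x s lam -> #|Jstar| <= #|supp lam|)%N ->
  (exists K : {set {set J}}, FPDT x K /\ Jstar \in K) ->
  in_hull (Mj x) Jstar (centroid x) ->
  s = C.
Proof.
move=> _ _ mecC [lam [[lam_ge0 sum_lam s_eq slack] supp_lam]] _ _.
move=> [w [w_ge0 w_out sum_w M_eq]].
have J_gt0 : (0 < #|J|)%N.
  apply/card_gt0P; case: (pickP J) => [j _|J0]; first by exists j.
  by move: sum_lam; rewrite big_pred0 // => /eqP; rewrite eq_sym oner_eq0.
set n : R := #|J|%:R.
have n1_gt0 : 0 < n + 1 by rewrite ltr_wpDl ?ler0n.
pose mu j := (n + 1)^-1 * (lam j + n * w j).
have s_mu : s = \sum_j mu j *: x j.
  by rewrite s_eq (Mj_comb_barycentre J_gt0 sum_lam sum_w M_eq).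
symmetry; rewrite s_mu; apply: farthest_barycentre_maxdist_le.
- rewrite -mulr_sumr big_split /= -mulr_sumr sum_lam sum_w mulr1 addrC.
  by rewrite mulVf ?gt_eqF.
- move=> j; apply: mulr_ge0; first by rewrite invr_ge0 ltW.
  by rewrite addr_ge0 // mulr_ge0 ?ler0n.
- move=> j; rewrite -s_mu; have [lam0|lam_neq0 _] := eqVneq (lam j) 0.
    rewrite /mu lam0 w_out ?mulr0 ?addr0 ?mulr0 ?eqxx //.
    by rewrite -supp_lam inE lam0 eqxx.
  move/eqP: (slack j); rewrite mulf_eq0 (negPf lam_neq0) subr_eq0.
  by move/eqP.
- exact: mecC.
Qed.
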